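(* Let $(M_\alpha,\varphi_{\alpha\beta})$ be an inverse system, indexed by a countable upward directed poset, of injective $\mathbb{Z}$-modules and surjective homomorphisms $\varphi_{\alpha\beta}:M_\beta\to M_\alpha$, and let $M$ be its inverse limit. Let $M_{\mathrm{div}}$ be the largest divisible submodule of $M$, i.e. the sum of the images of all $\mathbb{Z}$-module homomorphisms $\mathbb{Q}\to M$. Then for every index $\alpha$, the composite $M_{\mathrm{div}}\hookrightarrow M\to M_\alpha$ (with $M\to M_\alpha$ the canonical projection) is surjective.
   Context: For $\mathbb{Z}$-modules (abelian groups), injective is equivalent to divisible. *)

(* Z-modules = zmodType; Q = rat (as an additive group). *)
From HB Require Import structures.
From mathcomp Require Import all_boot all_order all_algebra.
Set Implicit Arguments. Unset Strict Implicit. Unset Printing Implicit Defensive.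
Import GRing.Theory.
Local Open Scope ring_scope.

Definition is_hom (A B : zmodType) (f : A -> B) : Prop :=
  forall x y, f (x - y) = f x - f y.

Definition injective_zmod (E : zmodType) : Prop :=
  forall (A B : zmodType) (i : A -> B) (g : A -> E),
    is_hom i -> injective i -> is_hom g ->
    exists h : B -> E, is_hom h /\ forall a, h (i a) = g a.

Definition directed_poset (I : Type) (le : rel I) : Prop :=
  [/\ reflexive le, transitive le, antisymmetric le &
      forall a b, exists c, le a c /\ le b c].

(* Inverse system: phi a b : M b -> M a, meaningful only for le a b. *)
Definition inverse_system (I : Type) (le : rel I) (M : I -> zmodType)
  (phi : forall a b, M b -> M a) : Prop :=
  [/\ forall a b, le a b -> is_hom (phi a b),
      forall a (x : M a), phi a a x = x &
      forall a b c, le a b -> le b c ->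
        forall x : M c, phi a b (phi b c x) = phi a c x].

(* The inverse limit, as a subgroup of the product: compatible families. *)
Definition in_limit (I : Type) (le : rel I) (M : I -> zmodType)
  (phi : forall a b, M b -> M a) (x : forall i, M i) : Prop :=
  forall a b, le a b -> phi a b (x b) = x a.

(* A Z-module hom Q -> lim M (operations on the limit are componentwise). *)
Definition hom_Q_to_limit (I : Type) (le : rel I) (M : I -> zmodType)
  (phi : forall a b, M b -> M a) (g : rat -> forall i, M i) : Prop :=
  (forall q, in_limit le phi (g q)) /\
  (forall i, is_hom (fun q => g q i)).

(* M_div: sum of the images of all homs Q -> M, i.e. finite sums of
   elements of such images (componentwise sums). *)
Definition in_Mdiv (I : Type) (le : rel I) (M : I -> zmodType)
  (phi : forall a b, M b -> M a) (x : forall i, M i) : Prop :=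
  exists (n : nat) (g : 'I_n -> rat -> forall i, M i) (q : 'I_n -> rat),
    (forall k, hom_Q_to_limit le phi (g k)) /\
    forall i, x i = \sum_(k < n) g k (q k) i.

From HB Require Import structures.
From mathcomp Require Import all_boot all_order all_algebra.
Import GRing.Theory Num.Theory.
Set Implicit Arguments. Unset Strict Implicit.

(* Since the index poset is countable and directed, it has a
   cofinal increasing chain c_0 <= c_1 <= ... with c_0 = a.  Injective
   Z-modules are divisible and the transition maps are surjective, so we can
   choose w_n in M(c_n) with w_0 lifting y and phi(w_{n+1} * (n+1)) = w_n; so
   w_n plays the role of "y / n!" along the chain.  For a rational q and n
   large enough that denq q divides n!, the integer q * n! is defined and
   the element phi_{i,c_n}(w_n * (q * n!)) of M_i does not depend on n.
   This defines a homomorphism Q -> lim M whose value at 1 has component y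
   at a, so y lies in the image of M_div. *)

Local Open Scope ring_scope.

Section Additive.
Variables (A B : zmodType) (f : A -> B).
Hypothesis f_hom : is_hom f.

Lemma hom0 : f 0 = 0.
Proof. by have := f_hom 0 0; rewrite !subrr. Qed.

Lemma homN x : f (- x) = - f x.
Proof. by have := f_hom 0 x; rewrite sub0r hom0 sub0r. Qed.

Lemma homD x y : f (x + y) = f x + f y.
Proof. by have := f_hom x (- y); rewrite opprK => ->; rewrite homN opprK. Qed.

Lemma homMn x n : f (x *+ n) = f x *+ n.
Proof. by elim: n => [|n IH]; rewrite ?mulr0n ?hom0 // !mulrS homD IH. Qed.

Lemma homMz x k : f (x *~ k) = f x *~ k.
Proof.
case: k => n; first by rewrite -!pmulrn homMn.
by rewrite NegzE !mulrNz homN -!pmulrn homMn.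
Qed.

End Additive.

Definition divisible (E : zmodType) : Prop :=
  forall (x : E) (n : nat), exists z : E, z *+ n.+1 = x.

(* Injective implies divisible: extend k |-> x *~ k along Z -> Q and
   evaluate the extension at 1/(n+1). *)
Lemma injective_divisible (E : zmodType) : injective_zmod E -> divisible E.
Proof.
move=> injE x n.
have intr_hom : is_hom (intr : int -> rat) by move=> k l; rewrite intrB.
have mulz_hom : is_hom (fun k : int => x *~ k) by move=> k l; rewrite mulrzBr.
have [h [h_hom h_ext]] := injE _ _ _ _ intr_hom (@intr_inj rat) mulz_hom.
exists (h (n.+1%:R)^-1).
rewrite -(homMn h_hom) -[RHS]mulr1z -h_ext /=; congr h.
by rewrite -(mulr_natr (n.+1%:R^-1)) mulVf ?pnatr_eq0.
Qed.

(* A countable directed set has a cofinal increasing chain starting at any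
   prescribed element: step n goes above the previous term and the n-th
   element of the enumeration. *)
Lemma cofinal_chain (I : countType) (le : rel I) :
  (forall x y, exists z, le x z /\ le y z) ->
  forall a : I, exists c : nat -> I,
    [/\ c 0 = a, forall n, le (c n) (c n.+1) & forall i, exists n, le i (c n)].
Proof.
move=> dir a.
have dirb x y : exists z, le x z && le y z.
  by have [z [xz yz]] := dir x y; exists z; rewrite xz yz.
pose next x n := xchoose (dirb x (odflt a (unpickle n))).
have next_above x n : le x (next x n) && le (odflt a (unpickle n)) (next x n).
  exact: (xchooseP (dirb x (odflt a (unpickle n)))).
pose c := fix c n := if n is m.+1 then next (c m) m else a.
exists c; split=> // [n|i]; first by case/andP: (next_above (c n) n).
exists (pickle i).+1; have /andP[_] := next_above (c (pickle i)) (pickle i).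
by rewrite pickleK.
Qed.

Lemma above_chain (I : Type) (le : rel I) (c : nat -> I) :
  transitive le -> (forall n, le (c n) (c n.+1)) ->
  forall i n m, le i (c n) -> (n <= m)%N -> le i (c m).
Proof.
move=> le_trans c_incr i n m i_cn; elim: m => [|m IH].
  by rewrite leqn0 => /eqP <-.
rewrite leq_eqVlt => /orP[/eqP <- // | /IH i_cm]; exact: le_trans (c_incr m).
Qed.

(* The integer q * n!, meaningful when denq q divides n! (den_dvd_fact);
   these are the multipliers applied to the tower below. *)
Definition fact_scale (q : rat) (n : nat) : int :=
  numq q * ((n`!)%:Z %/ denq q)%Z.

Definition den_dvd_fact (q : rat) (n : nat) : bool := (`|denq q| %| n`!)%N.

Lemma den_dvd_factS q n : den_dvd_fact q n -> den_dvd_fact q n.+1.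
Proof. by rewrite /den_dvd_fact factS => /dvdn_trans; apply; apply: dvdn_mull. Qed.

Lemma den_dvd_fact_le q n m :
  den_dvd_fact q n -> (n <= m)%N -> den_dvd_fact q m.
Proof.
move=> qn; elim: m => [|m IH]; first by rewrite leqn0 => /eqP <-.
by rewrite leq_eqVlt => /orP[/eqP <- // | /IH /den_dvd_factS].
Qed.

Lemma den_dvd_fact_large q n : (`|denq q| <= n)%N -> den_dvd_fact q n.
Proof. by move=> qn; apply: dvdn_fact; rewrite qn andbT absz_gt0 denq_neq0. Qed.

Lemma fact_scaleE q n :
  den_dvd_fact q n -> (fact_scale q n)%:~R = q * (n`!)%:R :> rat.
Proof.
move=> qn; have /divzK : (denq q %| (n`!)%:Z)%Z by rewrite dvdzE.
rewrite /fact_scale; move: ((n`!)%:Z %/ denq q)%Z => k k_den.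
have -> : (n`!)%:R = (k * denq q)%:~R :> rat by rewrite pmulrn k_den.
have q_den : q * (denq q)%:~R = (numq q)%:~R.
  by rewrite -{1}(divq_num_den q) mulfVK ?intr_eq0 ?denq_neq0.
by rewrite !intrM mulrCA q_den mulrC.
Qed.

Lemma fact_scaleS q n :
  den_dvd_fact q n -> fact_scale q n.+1 = fact_scale q n * n.+1%:Z.
Proof.
move=> qn; apply: (@intr_inj rat).
rewrite [RHS]intrM !fact_scaleE ?den_dvd_factS // factS natrM -pmulrn.
by rewrite [_ * n`!%:R]mulrC mulrA.
Qed.

Lemma fact_scaleB q1 q2 n :
  den_dvd_fact q1 n -> den_dvd_fact q2 n -> den_dvd_fact (q1 - q2) n ->
  fact_scale (q1 - q2) n = fact_scale q1 n - fact_scale q2 n.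
Proof.
by move=> h1 h2 h12; apply: (@intr_inj rat); rewrite [RHS]intrB !fact_scaleE ?mulrBl.
Qed.

Section Tower.
Variables (I : Type) (le : rel I) (M : I -> zmodType).
Variable phi : forall a b, M b -> M a.
Arguments phi : clear implicits.
Hypothesis le_trans : transitive le.
Hypothesis phi_hom : forall a b, le a b -> is_hom (phi a b).
Hypothesis phi_comp : forall a b c, le a b -> le b c ->
  forall x : M c, phi a b (phi b c x) = phi a c x.
Variable c : nat -> I.
Hypothesis c_incr : forall n, le (c n) (c n.+1).
Hypothesis c_cofinal : forall i, exists n, le i (c n).

Lemma divisible_tower_exists :
  (forall n, divisible (M (c n.+1))) ->
  (forall n (y : M (c n)), exists z, phi (c n) (c n.+1) z = y) ->
  forall w0 : M (c 0), exists w : forall n, M (c n),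
    w 0 = w0 /\ forall n, phi (c n) (c n.+1) (w n.+1 *+ n.+1) = w n.
Proof.
move=> divM surj w0.
have step n (v : M (c n)) : exists z, phi (c n) (c n.+1) (z *+ n.+1) == v.
  have [u <-] := surj n v; have [z <-] := divM n u n.
  by exists z.
pose w := fix w n : M (c n) :=
  if n is m.+1 return M (c n) then xchoose (step m (w m)) else w0.
by exists w; split=> // n; apply/eqP; exact: xchooseP (step n (w n)).
Qed.

Variable w : forall n, M (c n).
Hypothesis w_div : forall n, phi (c n) (c n.+1) (w n.+1 *+ n.+1) = w n.

(* Candidate i-component of the image of q: "q * y" computed at stage n. *)
Definition tower_at (q : rat) (i : I) (n : nat) : M i :=
  phi i (c n) (w n *~ fact_scale q n).

(* One step up the chain does not change the stage-n value, because
   w (n+1) * (n+1) maps onto w n. *)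
Lemma tower_atS q i n : le i (c n) -> den_dvd_fact q n ->
  tower_at q i n.+1 = tower_at q i n.
Proof.
move=> i_cn qn; rewrite /tower_at fact_scaleS // -(phi_comp i_cn (c_incr n)).
by rewrite mulrC mulrzA -pmulrn (homMz (phi_hom (c_incr n))) w_div.
Qed.

Lemma tower_at_stable q i n m : le i (c n) -> den_dvd_fact q n ->
  (n <= m)%N -> tower_at q i m = tower_at q i n.
Proof.
move=> i_cn qn; elim: m => [|m IH]; first by rewrite leqn0 => /eqP <-.
rewrite leq_eqVlt => /orP[/eqP <- // | nm].
rewrite tower_atS ?IH //; first exact: (above_chain le_trans c_incr i_cn nm).
exact: (den_dvd_fact_le qn nm).
Qed.

Definition stage (q : rat) (i : I) : nat :=
  maxn (xchoose (c_cofinal i)) `|denq q|.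

Lemma stage_above q i n : (stage q i <= n)%N -> le i (c n).
Proof.
move=> /(leq_trans (leq_maxl _ _)); apply: (above_chain le_trans c_incr).
exact: xchooseP (c_cofinal i).
Qed.

Lemma stage_den q i n : (stage q i <= n)%N -> den_dvd_fact q n.
Proof. by move=> /(leq_trans (leq_maxr _ _)); apply: den_dvd_fact_large. Qed.

Definition tower (q : rat) (i : I) : M i := tower_at q i (stage q i).

Lemma towerE q i n : le i (c n) -> den_dvd_fact q n -> tower q i = tower_at q i n.
Proof.
move=> i_cn qn; have i_stage := stage_above (leqnn (stage q i)).
have q_stage := stage_den (leqnn (stage q i)).
rewrite /tower -(tower_at_stable i_stage q_stage (leq_maxl _ n)).
by rewrite (tower_at_stable i_cn qn (leq_maxr _ _)).
Qed.

(* Compatibility and additivity, both checked at a common admissible stage. *)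
Lemma tower_in_limit q : in_limit le phi (tower q).
Proof.
move=> a b ab; have b_c := stage_above (leqnn (stage q b)).
have q_n := stage_den (leqnn (stage q b)).
by rewrite !(towerE _ q_n) ?phi_comp //; exact: le_trans b_c.
Qed.

Lemma tower_hom i : is_hom (fun q => tower q i).
Proof.
move=> q1 q2 /=.
pose n := maxn (stage q1 i) (maxn (stage q2 i) (stage (q1 - q2) i)).
have h1 : (stage q1 i <= n)%N by exact: leq_maxl.
have h2 : (stage q2 i <= n)%N by exact: leq_trans (leq_maxl _ _) (leq_maxr _ _).
have h12 : (stage (q1 - q2) i <= n)%N.
  exact: leq_trans (leq_maxr _ _) (leq_maxr _ _).
rewrite !(towerE (stage_above h1)) ?(stage_den h1, stage_den h2, stage_den h12) //.
rewrite /tower_at fact_scaleB ?(stage_den h1, stage_den h2, stage_den h12) //.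
by rewrite mulrzBr (phi_hom (stage_above h1)).
Qed.

Lemma tower_hom_Q : hom_Q_to_limit le phi tower.
Proof. by split; [exact: tower_in_limit | exact: tower_hom]. Qed.

Lemma tower_one i : le i (c 0) -> tower 1 i = phi i (c 0) (w 0).
Proof. by move=> i_c0; rewrite (towerE i_c0). Qed.

End Tower.

Theorem corollary6 (I : countType) (le : rel I) (M : I -> zmodType)
  (phi : forall a b, M b -> M a) :
  directed_poset le ->
  @inverse_system I le M phi ->
  (forall i, injective_zmod (M i)) ->
  (forall a b, le a b -> forall y : M a, exists z : M b, phi a b z = y) ->
  forall (a : I) (y : M a),
    exists x : forall i, M i,
      in_limit le phi x /\ in_Mdiv le phi x /\ x a = y.
Proof.
move=> [le_refl le_trans _ dir] [phi_hom _ phi_comp] injM surj a y.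
have [c [c0 c_incr c_cofinal]] := cofinal_chain dir a.
have a_c0 : le a (c 0) by rewrite c0 le_refl.
have [y0 y0_y] := surj _ _ a_c0 y.
have [w [w0 w_div]] := divisible_tower_exists
  (fun n => injective_divisible (injM (c n.+1))) (fun n => surj _ _ (c_incr n)) y0.
have g_Q := tower_hom_Q le_trans phi_hom phi_comp c_incr c_cofinal w_div.
exists (tower phi c_cofinal w 1); split; first exact: g_Q.1.
split; last by rewrite (tower_one le_trans phi_hom phi_comp c_incr) // w0 y0_y.
exists 1%N, (fun _ => tower phi c_cofinal w), (fun _ => 1).
by split=> [_ | i]; [exact: g_Q | rewrite big_ord1].
Qed.
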